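(* (1) Let $a_n=\sum_{k=0}^n\binom{n}{k}^2\binom{n+k}{k}$. Then for every prime $p$ and every integer $n$ with $0\le n\le p-1$, $$a_n\equiv(-1)^na_{p-1-n}\pmod{p}.$$ (2) Let $b_n=\sum_{k=0}^n\binom{n}{k}^2\binom{2k}{k}$. Then for every prime $p>3$ and every integer $n$ with $0\le n\le p-1$, $$b_n\equiv\left(\frac{-3}{p}\right)9^nb_{p-1-n}\pmod{p},$$ where $\left(\frac{-3}{p}\right)$ is the Legendre symbol. *)

From mathcomp Require Import all_boot all_order all_algebra.
Set Implicit Arguments. Unset Strict Implicit. Unset Printing Implicit Defensive.
Import Order.TTheory GRing.Theory Num.Theory.
Local Open Scope ring_scope.

Definition apery_a (n : nat) : nat :=
  (\sum_(0 <= k < n.+1) 'C(n, k) ^ 2 * 'C(n + k, k))%N.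

Definition seq_b (n : nat) : nat :=
  (\sum_(0 <= k < n.+1) 'C(n, k) ^ 2 * 'C(2 * k, k))%N.

Definition legendre (a : int) (p : nat) : int :=
  if (p%:Z %| a)%Z then 0
  else if [exists x : 'I_p, ((x%:Z) ^+ 2 == a %[mod p%:Z])%Z] then 1 else -1.

(* Both sequences satisfy Apery-like recurrences
     (n+1)^2 u_(n+1) = (A n (n+1) + 3) u_n + Q n^2 u_(n-1),
   with (A, Q) = (11, 1) for a and (10, -9) for b, obtained by creative telescoping.
   Modulo p, the substitution n |-> p-1-n exchanges n^2 and (n+1)^2 and fixes n (n+1),
   so (-Q)^n u_(p-1-n) satisfies the same recurrence as u_n for n < p-1, and is
   therefore u_(p-1) u_n.  Finally a_(p-1) = 1 and
   b_(p-1) = sum_k C(2k,k) = sum_k (-4)^k C((p-1)/2, k) = (-3)^((p-1)/2) mod p,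
   which is the Legendre symbol (-3/p) by Euler's criterion. *)

From mathcomp Require Import all_boot all_order all_algebra.
From mathcomp Require Import finfield zify ring.
Import Order.TTheory GRing.Theory Num.Theory.
Local Open Scope ring_scope.
Set Implicit Arguments. Unset Strict Implicit.

Section PcharBinomial.
Variables (F : fieldType) (p : nat).
Hypothesis pF : p \in [pchar F].

Lemma natr_pchar_opp a b : (a + b = p)%N -> a%:R = - b%:R :> F.
Proof. by move=> abp; apply/eqP; rewrite -subr_eq0 opprK -natrD abp (pcharf0 pF). Qed.

Lemma natr_pchar_neq0 k : (0 < k < p)%N -> k%:R != 0 :> F.
Proof. by case/andP=> k0 kp; rewrite -(dvdn_pcharf pF) gtnNdvd. Qed.

Lemma fact_pchar_neq0 k : (k < p)%N -> k`!%:R != 0 :> F.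
Proof.
elim: k => [|k IH] kp; first by rewrite fact0 oner_neq0.
by rewrite factS natrM mulf_neq0 ?IH ?natr_pchar_neq0 //; lia.
Qed.

Lemma ffact_pchar_reflect n k : (n < p)%N ->
  ((p - 1 - n) ^_ k)%:R = (-1) ^+ k * ((n + k) ^_ k)%:R :> F.
Proof.
move=> np; elim: k => [|k IH]; first by rewrite !ffactn0 expr0 mul1r.
rewrite ffactnSr addnS ffactSS !natrM exprS.
have [le|lt] := leqP k (p - 1 - n); last first.
  move: IH; rewrite ffact_small // => /esym/eqP; rewrite mulf_eq0 signr_eq0 /=.
  by move=> /eqP ->; rewrite !(mulr0, mul0r).
rewrite IH (natr_pchar_opp (b := (n + k).+1)); [ring | lia].
Qed.

Lemma bin_pchar_reflect n k : (n < p)%N -> (k < p)%N ->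
  'C(p - 1 - n, k)%:R = (-1) ^+ k * 'C(n + k, k)%:R :> F.
Proof.
move=> np kp; apply: (mulIf (fact_pchar_neq0 kp)).
by rewrite -!natrM !bin_ffact -mulrA -natrM bin_ffact ffact_pchar_reflect.
Qed.

Lemma ffact_pchar_half h k : h.*2.+1 = p ->
  4 ^+ k * (h ^_ k)%:R * k`!%:R = (-1) ^+ k * (k.*2)`!%:R :> F.
Proof.
move=> hp; elim: k => [|k IH]; first by rewrite !expr0 ffactn0 fact0 !mul1r.
rewrite ffactnSr doubleS !factS !natrM !exprS.
have [le|lt] := leqP k h; last first.
  move: IH; rewrite ffact_small // mulr0 mul0r => /esym/eqP.
  by rewrite mulf_eq0 signr_eq0 /= => /eqP ->; rewrite !(mulr0, mul0r).
have half : 2%:R * (h - k)%:R = - k.*2.+1%:R :> F.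
  by rewrite -natrM mul2n; apply: natr_pchar_opp; lia.
have dbl : k.*2.+2%:R = 2%:R * k.+1%:R :> F by rewrite -natrM mul2n doubleS.
have -> : k.*2.+1%:R = - (2 * (h - k)%:R) :> F by rewrite half opprK.
rewrite dbl; transitivity (4 * k.+1%:R * (h - k)%:R * ((-1) ^+ k * (k.*2)`!%:R) : F).
  by rewrite -IH; ring.
ring.
Qed.

Lemma bin_pchar_central h k : h.*2.+1 = p -> (k < p)%N ->
  'C(2 * k, k)%:R = (-4) ^+ k * 'C(h, k)%:R :> F.
Proof.
move=> hp kp; have kf := fact_pchar_neq0 kp.
have binE := bin_fact (leq_addr k k); rewrite addnK addnn in binE.
apply: (mulIf kf); apply: (mulIf kf).
rewrite mul2n -mulrA -!natrM binE.
transitivity ((-1) ^+ k * ((-1) ^+ k * (k.*2)`!%:R) : F).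
  by rewrite mulrA -expr2 sqrr_sign mul1r.
rewrite -(ffact_pchar_half k hp) -(bin_ffact h k) !natrM -[-4]mulN1r exprMn; ring.
Qed.

End PcharBinomial.

(* At n = 0 the junk value u n.-1 = u 0 is multiplied by 0. *)
Definition apery_rec {R : ringType} (A B Q : R) (u : nat -> R) (n : nat) : Prop :=
  n.+1%:R ^+ 2 * u n.+1 = (A * n%:R * n.+1%:R + B) * u n + Q * n%:R ^+ 2 * u n.-1.

Section AperyRecurrenceReflection.
Variables (F : fieldType) (p : nat) (A B Q : F).
Hypothesis pF : p \in [pchar F].

Lemma apery_recB (z u : nat -> F) c n :
  apery_rec A B Q z n -> apery_rec A B Q u n ->
  apery_rec A B Q (fun k => z k - c * u k) n.
Proof. by rewrite /apery_rec mulrBr [_ * (c * _)]mulrCA => -> ->; ring. Qed.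

Lemma apery_rec_eq0 (v : nat -> F) :
  (forall n, (n.+1 < p)%N -> apery_rec A B Q v n) -> v 0%N = 0 ->
  forall n, (n < p)%N -> v n = 0.
Proof.
move=> rec v0.
have pair0 n : (n.+1 < p)%N -> v n = 0 /\ v n.+1 = 0.
  elim: n => [|n IH] ltnp.
    by split=> //; move: (rec 0%N ltnp); rewrite /apery_rec v0 !(mulr0, mul0r, addr0) expr1n mul1r.
  have [vn vn1] := IH (ltnW ltnp); split=> //.
  have nz : n.+2%:R ^+ 2 != 0 :> F by rewrite expf_neq0 // (natr_pchar_neq0 pF); lia.
  move: (rec n.+1 ltnp); rewrite /apery_rec /= vn vn1 !(mulr0, addr0) => /eqP.
  by rewrite mulf_eq0 (negbTE nz) => /eqP.
by case=> [//|n] ltnp; case: (pair0 n ltnp).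
Qed.

Lemma apery_rec_reflect (u : nat -> F) :
  (forall n, apery_rec A B Q u n) ->
  forall n, (n.+1 < p)%N -> apery_rec A B Q (fun k => (-Q) ^+ k * u (p - 1 - k)%N) n.
Proof.
move=> rec n ltnp; have := rec (p - 1 - n)%N; rewrite /apery_rec.
rewrite (natr_pchar_opp pF (a := (p - 1 - n).+1) (b := n)); last by lia.
rewrite (natr_pchar_opp pF (a := p - 1 - n) (b := n.+1)); last by lia.
rewrite (_ : (p - 1 - n).-1 = p - 1 - n.+1)%N; last by lia.
move/eqP; rewrite -subr_eq0 => /eqP rec_refl; apply/eqP; rewrite -subr_eq0; apply/eqP.
case: n ltnp rec_refl => [|n] ltnp rec_refl.
  by rewrite -[RHS]rec_refl; ring.
rewrite (_ : (p - 1 - n.+1).+1 = p - 1 - n)%N in rec_refl; last by lia.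
by rewrite -[RHS](mulr0 (- ((-Q) ^+ n * Q))) -rec_refl /= !exprS; ring.
Qed.

Lemma apery_rec_reflection (u : nat -> F) :
  (forall n, apery_rec A B Q u n) -> u 0%N = 1 ->
  forall n, (n < p)%N -> (-Q) ^+ n * u (p - 1 - n)%N = u (p - 1)%N * u n.
Proof.
move=> rec u0 n ltnp; apply/eqP; rewrite -subr_eq0; apply/eqP; move: n ltnp.
apply: apery_rec_eq0 => [n ltnp|]; last by rewrite u0 subn0 expr0 mul1r mulr1 subrr.
exact: apery_recB (apery_rec_reflect rec ltnp) (rec n).
Qed.

End AperyRecurrenceReflection.

Lemma sum_widen_zero {V : zmodType} (f : nat -> V) n N : (n < N)%N ->
  (forall k, (n < k)%N -> f k = 0) ->
  \sum_(0 <= k < n.+1) f k = \sum_(0 <= k < N) f k.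
Proof.
move=> ltnN f0; rewrite [RHS](big_cat_nat _ (n := n.+1)) //=.
rewrite [X in _ + X]big1_seq ?addr0 // => k /andP[_].
by rewrite mem_index_iota => /andP[/f0].
Qed.

Lemma creative_telescoping {R : ringType} (T : nat -> nat -> R) (G : nat -> R)
    (c0 c1 c2 : R) m :
  (forall n k, (n < k)%N -> T n k = 0) ->
  (forall k, c2 * T m.+2 k + c1 * T m.+1 k + c0 * T m k = G k.+1 - G k) ->
  G 0%N = 0 -> G m.+3 = 0 ->
  c2 * \sum_(0 <= k < m.+3) T m.+2 k + c1 * \sum_(0 <= k < m.+2) T m.+1 k
    + c0 * \sum_(0 <= k < m.+1) T m k = 0.
Proof.
move=> T0 cert G0 G_end.
have widen n : (n <= m.+1)%N ->
    \sum_(0 <= k < n.+1) T n k = \sum_(0 <= k < m.+3) T n k.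
  by move=> le_nm; apply: sum_widen_zero (T0 n); lia.
rewrite (widen m.+1) ?(widen m) //.
by rewrite !mulr_sumr -!big_split /= (telescope_sumr_eq G) ?G0 ?G_end ?subr0.
Qed.

Definition binq (n k : nat) : rat := 'C(n, k)%:R.

Lemma binq_succ n k : binq n.+1 k.+1 = n.+1%:R / k.+1%:R * binq n k.
Proof.
have nz : k.+1%:R != 0 :> rat by rewrite pnatr_eq0.
by apply: (mulfI nz); rewrite mulrA mulrCA divff // mulr1 /binq -!natrM mul_bin_diag.
Qed.

Lemma binq_succr n k : binq n k.+1 = (n%:R - k%:R) / k.+1%:R * binq n k.
Proof.
have nz : k.+1%:R != 0 :> rat by rewrite pnatr_eq0.
apply: (mulfI nz); rewrite mulrA mulrCA divff // mulr1 /binq -natrM mul_bin_left natrM.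
by have [le_kn|lt_nk] := leqP k n; [rewrite natrB | rewrite bin_small // !mulr0].
Qed.

Lemma binq_predl n k : binq n k.+1 = (n%:R - k%:R) / n.+1%:R * binq n.+1 k.+1.
Proof.
have nz : n.+1%:R != 0 :> rat by rewrite pnatr_eq0.
apply: (mulfI nz); rewrite mulrA mulrCA divff // mulr1 /binq -natrM.
rewrite [(n.+1 * _)%N]mul_bin_down natrM.
have [le_kn|lt_nk] := leqP k n; first by rewrite subSS natrB.
by rewrite (@bin_small n.+1 k.+1) // !mulr0.
Qed.

Lemma addq_nat_neq0 (x : rat) n : 0 < x -> x + n%:R != 0.
Proof. by move=> x_gt0; rewrite lt0r_neq0 // ltr_wpDr. Qed.

Lemma binq_succl n k : (k < n)%N ->
  binq n.+1 k.+1 = n.+1%:R / (n - k)%:R * binq n k.+1.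
Proof.
move=> lt_kn; have nz : (n - k)%:R != 0 :> rat by rewrite pnatr_eq0 subn_eq0 -ltnNge.
apply: (mulfI nz); rewrite mulrA mulrCA divff // mulr1 (binq_predl n k) natrB 1?ltnW //.
by field; rewrite addq_nat_neq0.
Qed.

Lemma binq_central k :
  binq (2 * k.+1) k.+1 = 2 * (2 * k%:R + 1) / k.+1%:R * binq (2 * k) k.
Proof.
have sym : binq (2 * k).+1 k = binq (2 * k).+1 k.+1.
  by rewrite /binq -bin_sub; [congr ('C(_, _))%:R | ]; lia.
rewrite (_ : 2 * k.+1 = (2 * k).+2)%N; last by lia.
rewrite binq_succ sym binq_succ -!natr1 natrM.
by field; rewrite natr1 pnatr_eq0.
Qed.

Definition apery_a_term (n k : nat) : rat := binq n k ^+ 2 * binq (n + k) k.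

(* Certificates produced by Zeilberger's algorithm. *)
Definition apery_a_cert (m k : nat) : rat :=
  if k is j.+1 then
    (j.+1%:R ^+ 2 + (6 * m.+1%:R + 1) * j.+1%:R - m.+2%:R * (11 * m.+1%:R + 4))
    * binq m.+1 j ^+ 2 * binq (m.+1 + j) j
  else 0.

Lemma apery_a_certP m k :
  m.+2%:R ^+ 2 * apery_a_term m.+2 k + (- (11 * m.+1%:R * m.+2%:R + 3)) * apery_a_term m.+1 k
  + (- m.+1%:R ^+ 2) * apery_a_term m k = apery_a_cert m k.+1 - apery_a_cert m k.
Proof.
rewrite /apery_a_term /apery_a_cert; case: k => [|j].
  by rewrite /binq !bin0 subr0; ring.
rewrite !addSn !addnS.
rewrite (binq_predl m j) (binq_succ m.+1 j) (binq_succr m.+1 j).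
have lt_j : (j < (m + j).+2)%N by lia.
rewrite (binq_succl lt_j) (binq_succ (m + j).+1 j) (binq_succr (m + j).+1 j).
rewrite (_ : ((m + j).+2 - j = m.+2)%N); last by lia.
by field; rewrite !addq_nat_neq0.
Qed.

Lemma apery_a_sumq n : (apery_a n)%:R = \sum_(0 <= k < n.+1) apery_a_term n k.
Proof. by rewrite natr_sum; apply: eq_bigr => k _; rewrite natrM natrX. Qed.

Lemma apery_a_rec m : (m.+2 ^ 2 * apery_a m.+2
  = (11 * m.+1 * m.+2 + 3) * apery_a m.+1 + m.+1 ^ 2 * apery_a m)%N.
Proof.
apply/eqP; rewrite -(eqr_nat rat) -subr_eq0 !(natrD, natrM, natrX) !apery_a_sumq.
apply/eqP; rewrite -[RHS](creative_telescoping _ (apery_a_certP m)) //; first by ring.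
by move=> n k lt_nk; rewrite /apery_a_term /binq bin_small // expr0n mul0r.
by rewrite /apery_a_cert /binq bin_small // expr0n mulr0 mul0r.
Qed.

Definition seq_b_term (n k : nat) : rat := binq n k ^+ 2 * binq (2 * k) k.

Definition seq_b_cert (m k : nat) : rat :=
  if k is j.+1 then
    j.+1%:R * (3 * j%:R - 4 * m.+1%:R - 1) * binq m.+1 j ^+ 2 * binq (2 * j.+1) j.+1
  else 0.

Lemma seq_b_certP m k :
  m.+2%:R ^+ 2 * seq_b_term m.+2 k + (- (10 * m.+1%:R * m.+2%:R + 3)) * seq_b_term m.+1 k
  + 9 * m.+1%:R ^+ 2 * seq_b_term m k = seq_b_cert m k.+1 - seq_b_cert m k.
Proof.
rewrite /seq_b_term /seq_b_cert; case: k => [|j].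
  by rewrite /binq !bin0 subr0 (_ : 'C(2 * 1, 1) = 2)%N //; ring.
rewrite (binq_predl m j) (binq_succ m.+1 j) (binq_succr m.+1 j) (binq_central j.+1).
by field; rewrite !addq_nat_neq0.
Qed.

Lemma seq_b_sumq n : (seq_b n)%:R = \sum_(0 <= k < n.+1) seq_b_term n k.
Proof. by rewrite natr_sum; apply: eq_bigr => k _; rewrite natrM natrX. Qed.

Lemma seq_b_rec m : (m.+2 ^ 2 * seq_b m.+2 + 9 * m.+1 ^ 2 * seq_b m
  = (10 * m.+1 * m.+2 + 3) * seq_b m.+1)%N.
Proof.
apply/eqP; rewrite -(eqr_nat rat) -subr_eq0 !(natrD, natrM, natrX) !seq_b_sumq.
apply/eqP; rewrite -[RHS](creative_telescoping _ (seq_b_certP m)) //; first by ring.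
by move=> n k lt_nk; rewrite /seq_b_term /binq bin_small // expr0n mul0r.
by rewrite /seq_b_cert /binq bin_small // expr0n mulr0 mul0r.
Qed.

Lemma apery_a_recF (R : comRingType) n :
  apery_rec 11 3 1 (fun k => (apery_a k)%:R : R) n.
Proof.
rewrite /apery_rec; case: n => [|m] /=.
  have [-> ->] : (apery_a 0 = 1 /\ apery_a 1 = 3)%N by rewrite /apery_a unlock.
  ring.
have := congr1 (fun x : nat => x%:R : R) (apery_a_rec m).
by rewrite /= !(natrD, natrM, natrX) => ->; ring.
Qed.

Lemma seq_b_recF (R : comRingType) n :
  apery_rec 10 3 (-9) (fun k => (seq_b k)%:R : R) n.
Proof.
rewrite /apery_rec; case: n => [|m] /=.
  have [-> ->] : (seq_b 0 = 1 /\ seq_b 1 = 3)%N by rewrite /seq_b unlock.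
  ring.
have := congr1 (fun x : nat => x%:R : R) (seq_b_rec m).
rewrite /= !(natrD, natrM, natrX) => rec_b.
by apply: (addIr (9 * m.+1%:R ^+ 2 * (seq_b m)%:R)); rewrite rec_b; ring.
Qed.

Section PcharValues.
Variables (F : fieldType) (p : nat).
Hypothesis pF : p \in [pchar F].

Lemma bin_pchar_pred k : (k < p)%N -> 'C(p - 1, k)%:R = (-1) ^+ k :> F.
Proof.
move=> kp; have := bin_pchar_reflect pF (prime_gt0 (pcharf_prime pF)) kp.
by rewrite subn0 add0n binn mulr1.
Qed.

Lemma bin_pchar_pred_add k : (0 < k < p)%N -> 'C(p - 1 + k, k)%:R = 0 :> F.
Proof.
case/andP=> k_gt0 kp; have lt_p1p : (p - 1 < p)%N by lia.
have := bin_pchar_reflect pF lt_p1p kp.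
by rewrite subnn bin0n eqn0Ngt k_gt0 => /esym/eqP; rewrite mulf_eq0 signr_eq0 => /eqP.
Qed.

Lemma apery_a_pred_pchar : (apery_a (p - 1))%:R = 1 :> F.
Proof.
have p_gt0 := prime_gt0 (pcharf_prime pF); have p1S : (p - 1).+1 = p by lia.
rewrite /apery_a p1S natr_sum big_ltn // bin0 addn0 bin0 big1_seq ?addr0 // => k /andP[_].
by rewrite mem_index_iota natrM => /bin_pchar_pred_add ->; rewrite mulr0.
Qed.

Lemma seq_b_pred_pchar h : h.*2.+1 = p -> (seq_b (p - 1))%:R = (-3) ^+ h :> F.
Proof.
move=> hp; have p_gt0 := prime_gt0 (pcharf_prime pF); have p1S : (p - 1).+1 = p by lia.
transitivity (\sum_(0 <= k < p) (-4) ^+ k * 'C(h, k)%:R : F).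
  rewrite /seq_b p1S natr_sum big_nat [RHS]big_nat; apply: eq_bigr => k /andP[_ kp].
  by rewrite natrM natrX bin_pchar_pred // (bin_pchar_central pF hp) // sqrr_sign mul1r.
rewrite -(@sum_widen_zero _ _ h p) => [|| k lt_hk]; [| lia | by rewrite bin_small ?mulr0].
rewrite big_mkord (_ : -3 = -4 + 1 :> F) ?exprD1n; last by ring.
by apply: eq_bigr => k _; rewrite mulr_natr.
Qed.

End PcharValues.

Section PrimeField.
Variable p : nat.
Hypothesis p_pr : prime p.

Lemma eqz_mod_Fp (u v : int) : (u == v %[mod p%:Z])%Z = (u%:~R == v%:~R :> 'F_p).
Proof. by rewrite eqz_mod_dvd (dvdz_pcharf (pchar_Fp p_pr)) rmorphB /= subr_eq0. Qed.

Lemma Fp_fermat (x : 'F_p) : x != 0 -> x ^+ (p - 1) = 1.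
Proof.
move=> x_neq0; apply: (mulIf x_neq0); rewrite mul1r -exprSr.
by rewrite (_ : (p - 1).+1 = #|'F_p|) ?expf_card // card_Fp //; have := prime_gt1 p_pr; lia.
Qed.

Lemma Fp_sqr_of_unity_root h (x : 'F_p) : h.*2.+1 = p -> x ^+ h = 1 ->
  exists i : 'I_p, i%:R ^+ 2 = x.
Proof.
move=> hp xh; have pF := pchar_Fp p_pr; have h_gt0 : (0 < h)%N by have := prime_gt1 p_pr; lia.
(* The h squares 1^2, ..., h^2 are distinct h-th roots of unity, hence all of them. *)
pose sqrs := [seq (i%:R : 'F_p) ^+ 2 | i <- iota 1 h].
have sqrs_roots : all h.-unity_root sqrs.
  apply/allP => y /mapP[i]; rewrite mem_iota => /andP[i_gt0 ih] ->.
  apply/unity_rootP; rewrite -exprM mul2n (_ : h.*2 = p - 1)%N ?Fp_fermat //; last by lia.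
  by rewrite (natr_pchar_neq0 pF); lia.
have sqrs_uniq : uniq sqrs.
  rewrite map_inj_in_uniq ?iota_uniq // => i j.
  rewrite !mem_iota => /andP[i_gt0 ih] /andP[j_gt0 jh] /eqP.
  rewrite -subr_eq0 subr_sqr mulf_eq0 subr_eq0 -natrD (negbTE (natr_pchar_neq0 pF _)); last by lia.
  by rewrite orbF => /eqP /(congr1 (@nat_of_ord _)); rewrite !val_Fp_nat // !modn_small //; lia.
have size_sqrs : size sqrs = h by rewrite size_map size_iota.
have /mapP[i] : x \in sqrs.
  by rewrite -(mem_unity_roots h_gt0 sqrs_roots sqrs_uniq size_sqrs); apply/unity_rootP.
rewrite mem_iota => /andP[i_gt0 ih] ->.
have ip : (i < p)%N by lia.
by exists (Ordinal ip).
Qed.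

Lemma legendre_Fp h a : h.*2.+1 = p -> ~~ (p%:Z %| a)%Z ->
  (legendre a p)%:~R = a%:~R ^+ h :> 'F_p.
Proof.
move=> hp a_ndvd; have a_neq0 : a%:~R != 0 :> 'F_p by rewrite -(dvdz_pcharf (pchar_Fp p_pr)).
have ah_sqr : (a%:~R ^+ h) ^+ 2 = 1 :> 'F_p.
  by rewrite -exprM muln2 (_ : h.*2 = p - 1)%N ?Fp_fermat //; lia.
rewrite /legendre (negbTE a_ndvd); case: ifPn => [/existsP[i]|no_sqrt].
  rewrite eqz_mod_Fp rmorphXn /= -pmulrn => /eqP sq_i; rewrite -sq_i.
  rewrite -exprM mul2n (_ : h.*2 = p - 1)%N ?Fp_fermat //; last by lia.
  by apply: contraNneq a_neq0 => i0; rewrite -sq_i i0 expr0n.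
have : (a%:~R ^+ h - 1) * (a%:~R ^+ h + 1) == 0 :> 'F_p.
  by rewrite -subr_sqr ah_sqr expr1n subrr.
rewrite mulf_eq0 subr_eq0 addr_eq0 => /orP[/eqP ah1 | /eqP -> //].
have [i sq_i] := Fp_sqr_of_unity_root hp ah1.
by case/negP: no_sqrt; apply/existsP; exists i; rewrite eqz_mod_Fp rmorphXn /= -pmulrn sq_i.
Qed.

End PrimeField.

Lemma apery_a_reflect_mod p n : prime p -> (n <= p - 1)%N ->
  ((apery_a n)%:Z == (-1) ^+ n * (apery_a (p - 1 - n))%:Z %[mod p%:Z])%Z.
Proof.
move=> p_pr le_n; have lt_np : (n < p)%N by have := prime_gt0 p_pr; lia.
have pF := pchar_Fp p_pr; have a0 : (apery_a 0)%:R = 1 :> 'F_p by rewrite /apery_a unlock.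
rewrite eqz_mod_Fp // rmorphM /= intr_sign -!pmulrn.
by rewrite (apery_rec_reflection pF (@apery_a_recF _)) // apery_a_pred_pchar // mul1r.
Qed.

Lemma seq_b_reflect_mod p n : prime p -> (3 < p)%N -> (n <= p - 1)%N ->
  ((seq_b n)%:Z == legendre (-3) p * 9 ^+ n * (seq_b (p - 1 - n))%:Z %[mod p%:Z])%Z.
Proof.
move=> p_pr p_gt3 le_n; have lt_np : (n < p)%N by lia.
have pF := pchar_Fp p_pr; have b0 : (seq_b 0)%:R = 1 :> 'F_p by rewrite /seq_b unlock.
have [h hp] : exists h, h.*2.+1 = p.
  exists p./2; have [p2|p_odd] := even_prime p_pr; first by lia.
  by rewrite -[RHS]odd_double_half p_odd.
have ndvd3 : ~~ (p%:Z %| -3)%Z by apply/negP => /dvdn_leq; lia.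
rewrite eqz_mod_Fp // !rmorphM /= (legendre_Fp p_pr hp ndvd3) rmorphXn /=.
rewrite (_ : 9%:~R = - (-9) :> 'F_p); last by rewrite opprK.
rewrite -!pmulrn -mulrA.
rewrite (apery_rec_reflection pF (@seq_b_recF _)) // (seq_b_pred_pchar pF hp).
have m3_neq0 : -3 != 0 :> 'F_p by rewrite oppr_eq0 (natr_pchar_neq0 pF); lia.
have m3_sqr : (-3) ^+ h * (-3) ^+ h = 1 :> 'F_p.
  by rewrite -exprD addnn (_ : h.*2 = p - 1)%N ?Fp_fermat //; lia.
by rewrite (_ : (-3)%:~R = -3 :> 'F_p) // mulrA m3_sqr mul1r.
Qed.

Theorem mainTheorem7 :
  (forall (p n : nat), prime p -> (n <= p - 1)%N ->
     ((apery_a n)%:Z == (-1) ^+ n * (apery_a (p - 1 - n))%:Z %[mod p%:Z])%Z)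
  /\
  (forall (p n : nat), prime p -> (3 < p)%N -> (n <= p - 1)%N ->
     ((seq_b n)%:Z == legendre (-3) p * 9 ^+ n * (seq_b (p - 1 - n))%:Z
        %[mod p%:Z])%Z).
Proof. by split; [exact: apery_a_reflect_mod | exact: seq_b_reflect_mod]. Qed.
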